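(* Let $T$ be a ditree and let $S$ be a source set or a sink set of $T$. Then every geodetic set of $T$ contains at least one vertex of $S$.
   Context: All digraphs are finite, without loops or parallel arcs. The underlying undirected graph of a digraph is obtained by forgetting orientations and deleting parallel edges. A ditree is a digraph whose underlying undirected graph is a tree (it may contain $2$-cycles, i.e., pairs of opposite arcs $uv,vu$). For $S\subseteq V(D)$, $N^-(S)$ (resp. $N^+(S)$) is the set of vertices outside $S$ having an arc to (resp. from) some vertex of $S$. A source set is a maximal strongly connected component $S$ of $D$ with $N^-(S)\setminus S=\emptyset$; a sink set is a maximal strongly connected component $S$ with $N^+(S)\setminus S=\emptyset$. For vertices $u,v$, $I(u,v)$ is the set of vertices lying on some shortest directed path from $u$ to $v$; for $S\subseteq V(D)$, $I(S)=\bigcup_{u,v\in S}(I(u,v)\cup I(v,u))$. A geodetic set of $D$ is a set $S\subseteq V(D)$ with $I(S)=V(D)$. *)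

(* A digraph on a finite vertex type V is a relation
   arc : rel V (arc u v = there is an arc u -> v); no parallel arcs by
   construction, loops excluded by an irreflexivity hypothesis. *)
From mathcomp Require Import all_boot.
Set Implicit Arguments. Unset Strict Implicit. Unset Printing Implicit Defensive.

Section Digraph.
Variables (V : finType) (arc : rel V).

Definition uadj : rel V := fun u v => arc u v || arc v u.

(* underlying undirected graph is a tree: connected and acyclic
   (no cycle on >= 3 distinct vertices) *)
Definition ditree : Prop :=
  (forall x y : V, connect uadj x y) /\
  (forall c : seq V, uniq c -> 2 < size c -> ~~ cycle uadj c).

Definition scc (S : {set V}) : Prop :=
  exists x : V, S = [set y | connect arc x y && connect arc y x].

Definition source_set (S : {set V}) : Prop :=
  scc S /\ (forall u v, arc u v -> v \in S -> u \in S).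

Definition sink_set (S : {set V}) : Prop :=
  scc S /\ (forall u v, arc u v -> u \in S -> v \in S).

(* p is a shortest directed path from u to v (as the vertex list u :: p) *)
Definition shortest_path (u v : V) (p : seq V) : Prop :=
  path arc u p /\ last u p = v /\
  (forall q : seq V, path arc u q -> last u q = v -> size p <= size q).

Definition in_interval (u v w : V) : Prop :=
  exists p : seq V, shortest_path u v p /\ w \in u :: p.

Definition geodetic (S : {set V}) : Prop :=
  forall w : V, exists u v : V,
    [/\ u \in S, v \in S & (in_interval u v w \/ in_interval v u w)].

End Digraph.

From mathcomp Require Import all_boot.

Set Implicit Arguments.
Unset Strict Implicit.
Unset Printing Implicit Defensive.

(* Every vertex of I(u, v) is reachable from u and reaches v. A source set S
   contains all its ancestors and a sink set all its descendants, so if a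
   vertex of S lies in I(u, v) then u (resp. v) lies in S. A geodetic set
   covers any vertex of S by such an interval with both ends in the set. *)

Lemma connect_closed_fwd (T : finType) (e : rel T) (S : {set T}) :
  (forall u v, e u v -> u \in S -> v \in S) ->
  forall x y, connect e x y -> x \in S -> y \in S.
Proof.
move=> clS x y /connectP [p pxp ->]; elim: p x pxp => [|z p IHp] x //=.
by case/andP=> xz pzp xS; exact: IHp pzp (clS x z xz xS).
Qed.

Lemma connect_closed_bwd (T : finType) (e : rel T) (S : {set T}) :
  (forall u v, e u v -> v \in S -> u \in S) ->
  forall x y, connect e x y -> y \in S -> x \in S.
Proof.
move=> clS x y cxy; apply: (@connect_closed_fwd _ [rel u v | e v u] S).
- by move=> u v /clS.
- by rewrite connect_rev.
Qed.

Section Reachability.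
Variables (V : finType) (arc : rel V).

Lemma path_connect_last (a x : V) (p : seq V) :
  path arc a p -> x \in a :: p -> connect arc x (last a p).
Proof.
move=> pap xp; case/splitPl: xp pap => p1 p2 <-.
rewrite cat_path => /andP [_ pp2].
by rewrite last_cat; apply/connectP; exists p2.
Qed.

Lemma in_interval_connect (u v w : V) :
  in_interval arc u v w -> connect arc u w /\ connect arc w v.
Proof.
move=> [p [[pup [<- _]] wp]].
by split; [exact: path_connect wp | exact: path_connect_last].
Qed.

Lemma scc_nonempty (S : {set V}) : scc arc S -> exists x, x \in S.
Proof. by case=> x ->; exists x; rewrite inE connect0. Qed.

Lemma in_interval_source_or_sink (S : {set V}) (u v w : V) :
  source_set arc S \/ sink_set arc S ->
  w \in S -> in_interval arc u v w -> u \in S \/ v \in S.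
Proof.
move=> [[_ clS]|[_ clS]] wS /in_interval_connect [uw wv].
- by left; exact (connect_closed_bwd clS uw wS).
- by right; exact (connect_closed_fwd clS wv wS).
Qed.

End Reachability.

Theorem lemma2 (V : finType) (arc : rel V) :
  irreflexive arc -> ditree arc ->
  forall S : {set V}, source_set arc S \/ sink_set arc S ->
  forall G : {set V}, geodetic arc G ->
  exists x : V, x \in G /\ x \in S.
Proof.
move=> _ _ S srcS G geoG.
have [w wS] : exists w, w \in S.
  by case: srcS => [[sccS _]|[sccS _]]; exact: scc_nonempty sccS.
have [u [v [uG vG Iuv]]] := geoG w.
have [uS | vS] : u \in S \/ v \in S.
  by case: Iuv => /(in_interval_source_or_sink srcS wS); tauto.
- by exists u.
- by exists v.
Qed.
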